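(* Let $\varepsilon\in(0,1)$, $\rho\in\mathcal{D}$, and $X$ a Hermitian operator with $\operatorname{tr}[X]=1$. Then $D_{\min,\varepsilon}(\rho\|X)=-\log(1-\varepsilon)$ if and only if $\rho=X$.
   Context: $\mathcal{D}$ is the set of density operators on a finite-dimensional Hilbert space. For $\rho\in\mathcal{D}$ and Hermitian $X$, $D_{\min,\varepsilon}(\rho\|X)=-\log\alpha$ where $\alpha=\min\{\operatorname{tr}[EX]:0\le E\le I,\ \operatorname{tr}[\rho(I-E)]\le\varepsilon\}$, with the convention that $D_{\min,\varepsilon}(\rho\|X)=+\infty$ if $\alpha\le0$. *)

From mathcomp Require Import all_boot all_order all_algebra.
From mathcomp Require Import all_classical all_reals all_analysis.
From mathcomp.real_closed Require Import complex.

Set Implicit Arguments.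
Unset Strict Implicit.
Unset Printing Implicit Defensive.

Import Order.TTheory GRing.Theory Num.Theory.
Local Open Scope ring_scope.
Local Open Scope classical_set_scope.
Local Open Scope sesquilinear_scope.
Local Open Scope complex_scope.

Section Defs.
Variables (R : realType) (n : nat).
Local Notation C := R[i].

(* positive semidefinite: Hermitian and <v, A v> >= 0 for all vectors v
   (the order on R[i] is the partial order: z <= w iff w - z is real >= 0) *)
Definition psdmx (A : 'M[C]_n) : Prop :=
  A \is hermsymmx /\ forall v : 'cV[C]_n, 0 <= (v ^t* *m A *m v) 0 0.

Definition loewner_le (A B : 'M[C]_n) : Prop := psdmx (B - A).

Definition density (rho : 'M[C]_n) : Prop := psdmx rho /\ \tr rho = 1.

Definition feasible_test (eps : R) (rho E : 'M[C]_n) : Prop :=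
  [/\ loewner_le 0 E, loewner_le E 1%:M & \tr (rho *m (1%:M - E)) <= eps%:C].

(* alpha = min { tr[E X] : E feasible }  (the min exists by compactness;
   it is expressed as an infimum; tr[E X] is real for Hermitian E, X) *)
Definition Dmin_alpha (eps : R) (rho X : 'M[C]_n) : R :=
  inf [set complex.Re (\tr (E *m X)) | E in [set E | feasible_test eps rho E]].

Definition Dmin (eps : R) (rho X : 'M[C]_n) : \bar R :=
  let a := Dmin_alpha eps rho X in
  if 0 < a then ((- ln a)%:E)%E else (+oo)%E.

End Defs.

(* If rho = X, every feasible test satisfies tr[E rho] = 1 - tr[rho (I - E)] >= 1 - eps,
   with equality for E = (1 - eps) I, so alpha = 1 - eps.  If rho <> X, let D = rho - X
   and H = D - tr[rho D] I.  Then tr[rho H] = 0 and, since tr X = 1, tr[H X] = -tr[D^2] < 0.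
   For small d > 0 the test E = (1 - eps) I + d H stays between 0 and I and has the same
   error tr[rho (I - E)] = eps, while tr[E X] = 1 - eps - d tr[D^2] < 1 - eps.  As ln is
   injective, D_min = -log(1 - eps) exactly when alpha = 1 - eps. *)

From mathcomp Require Import all_boot all_order all_algebra.
From mathcomp Require Import all_classical all_reals all_analysis.
From mathcomp.real_closed Require Import complex.
Set Implicit Arguments.
Unset Strict Implicit.
Unset Printing Implicit Defensive.
Import Order.TTheory GRing.Theory Num.Theory.
Local Open Scope ring_scope.
Local Open Scope sesquilinear_scope.
Local Open Scope complex_scope.

Section CenteredMatrices.
Variables (R : comPzRingType) (n : nat).
Implicit Types (rho A X : 'M[R]_n).

Definition center_mx rho A := A - (\tr (rho *m A))%:M.

Lemma mxtrace_mul_center_mx rho A : \tr rho = 1 -> \tr (rho *m center_mx rho A) = 0.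
Proof. by move=> trrho; rewrite mulmxBr mul_mx_scalar linearB /= mxtraceZ trrho mulr1 subrr. Qed.

Lemma mxtrace_center_mx_diff_mul rho X : \tr X = 1 ->
  \tr (center_mx rho (rho - X) *m X) = - \tr ((rho - X) *m (rho - X)).
Proof.
move=> trX; rewrite mulmxBl mul_scalar_mx linearB /= mxtraceZ trX mulr1.
rewrite [\tr (rho *m _)]mxtrace_mulC -linearB /= -mulmxBr.
by rewrite -[X - rho]opprB mulmxN linearN.
Qed.

End CenteredMatrices.

Section HermitianMatrices.
Variables (C : numClosedFieldType) (n : nat).
Implicit Types (A B H : 'M[C]_n) (v : 'cV[C]_n).

Lemma hermsymmxP A : reflect (forall i j, A i j = (A j i)^*%R) (A \is hermsymmx).
Proof.
apply: (iffP idP) => [/is_hermitianmxP hA i j | hA].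
  by rewrite {1}hA expr0 scale1r !mxE.
by apply/is_hermitianmxP/matrixP => i j; rewrite expr0 scale1r !mxE hA.
Qed.

Lemma hermsymmxD A B : A \is hermsymmx -> B \is hermsymmx -> A + B \is hermsymmx.
Proof.
move=> /hermsymmxP hA /hermsymmxP hB.
by apply/hermsymmxP => i j; rewrite !mxE hA hB rmorphD.
Qed.

Lemma hermsymmxN A : A \is hermsymmx -> - A \is hermsymmx.
Proof. by move=> /hermsymmxP hA; apply/hermsymmxP => i j; rewrite !mxE hA rmorphN. Qed.

Lemma hermsymmxB A B : A \is hermsymmx -> B \is hermsymmx -> A - B \is hermsymmx.
Proof. by move=> hA hB; rewrite hermsymmxD ?hermsymmxN. Qed.

Lemma hermsymmxZ (c : C) A : c \is Num.real -> A \is hermsymmx -> c *: A \is hermsymmx.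
Proof.
move=> hc /hermsymmxP hA; apply/hermsymmxP => i j.
by rewrite !mxE rmorphM /= (conj_Creal hc) -hA.
Qed.

Lemma scalar_hermsymmx (c : C) : c \is Num.real -> (c%:M : 'M[C]_n) \is hermsymmx.
Proof. by move=> hc; rewrite -scalemx1 hermsymmxZ // hermitian1mx_subproof. Qed.

Lemma mxtrace_mul_real A B :
  A \is hermsymmx -> B \is hermsymmx -> \tr (A *m B) \is Num.real.
Proof.
move=> /hermsymmxP hA /hermsymmxP hB; apply/CrealP.
rewrite /mxtrace rmorph_sum; under eq_bigr => i _ do rewrite mxE rmorph_sum.
rewrite exchange_big /=; apply: eq_bigr => i _; rewrite mxE.
by apply: eq_bigr => j _ /=; rewrite rmorphM /= -hA -hB mulrC.
Qed.

Lemma center_mx_hermsymmx rho A :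
  rho \is hermsymmx -> A \is hermsymmx -> center_mx rho A \is hermsymmx.
Proof.
move=> hrho hA.
by rewrite /center_mx hermsymmxB ?scalar_hermsymmx ?mxtrace_mul_real.
Qed.

Lemma mxtrace_mul_self_gt0 A : A \is hermsymmx -> A != 0 -> 0 < \tr (A *m A).
Proof.
move=> /hermsymmxP hA nzA.
have -> : \tr (A *m A) = \sum_i \sum_j `|A i j| ^+ 2.
  apply: eq_bigr => i _; rewrite mxE.
  by apply: eq_bigr => j _; rewrite normCK -hA.
have row_ge0 i : 0 <= \sum_j `|A i j| ^+ 2 by apply: sumr_ge0 => j _.
rewrite lt_def sumr_ge0 // andbT; apply: contra nzA => /eqP/psumr_eq0P row0.
apply/eqP/matrixP => i j; apply/eqP; rewrite mxE -normr_eq0 -sqrf_eq0.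
have /psumr_eq0P entry0 := row0 (fun i _ => row_ge0 i) i isT.
by rewrite entry0.
Qed.

Definition qform A v : C := (v ^t* *m A *m v) 0 0.

Lemma qformE A v : qform A v = \sum_j \sum_i (v i 0)^*%R * A i j * v j 0.
Proof.
rewrite /qform mxE; apply: eq_bigr => j _; rewrite mxE big_distrl /=.
by apply: eq_bigr => i _; rewrite !mxE.
Qed.

Lemma qformD A B v : qform (A + B) v = qform A v + qform B v.
Proof. by rewrite /qform mulmxDr mulmxDl mxE. Qed.

Lemma qformZ c A v : qform (c *: A) v = c * qform A v.
Proof. by rewrite /qform -scalemxAr -scalemxAl mxE. Qed.

Lemma qform1 v : qform 1%:M v = \sum_i `|v i 0| ^+ 2.
Proof. by rewrite /qform mulmx1 mxE; apply: eq_bigr => i _; rewrite !mxE normCKC. Qed.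

Lemma qform1_ge0 v : 0 <= qform 1%:M v.
Proof. by rewrite qform1; apply: sumr_ge0. Qed.

Lemma qform_real A v : A \is hermsymmx -> qform A v \is Num.real.
Proof.
move=> /hermsymmxP hA; apply/CrealP; rewrite qformE rmorph_sum /= exchange_big /=.
apply: eq_bigr => j _; rewrite rmorph_sum; apply: eq_bigr => i _ /=.
by rewrite !rmorphM /= conjCK -hA mulrC [v i 0 * _]mulrC mulrA.
Qed.

Lemma normM_le_qform1 v i j : `|v i 0| * `|v j 0| <= qform 1%:M v.
Proof.
have sq_le k : `|v k 0| ^+ 2 <= qform 1%:M v.
  by rewrite qform1 (bigD1 k) //= lerDl; apply: sumr_ge0.
have [le_ij|le_ji] := real_leP (normr_real (v i 0)) (normr_real (v j 0)).
- by apply: le_trans (sq_le j); rewrite expr2 ler_wpM2r.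
- by apply: le_trans (sq_le i); rewrite expr2 ler_wpM2l // ltW.
Qed.

Definition mxabs_sum A : C := \sum_i \sum_j `|A i j|.

Lemma mxabs_sum_ge0 A : 0 <= mxabs_sum A.
Proof. by apply: sumr_ge0 => i _; apply: sumr_ge0. Qed.

Lemma norm_qform_le A v : `|qform A v| <= mxabs_sum A * qform 1%:M v.
Proof.
rewrite qformE /mxabs_sum exchange_big big_distrl /=.
apply: le_trans (ler_norm_sum _ _ _) _; apply: ler_sum => j _.
rewrite big_distrl /=; apply: le_trans (ler_norm_sum _ _ _) _; apply: ler_sum => i _.
rewrite !normrM norm_conjC mulrAC [X in _ <= X]mulrC.
by apply: ler_wpM2r => //; exact: normM_le_qform1.
Qed.

End HermitianMatrices.

Lemma exists_small_scale (F : numFieldType) (e M : F) : 0 < e < 1 -> 0 <= M ->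
  exists2 d, 0 < d & d * M <= e /\ d * M <= 1 - e.
Proof.
move=> /andP[e_gt0 e_lt1] M_ge0.
have M1_gt0 : 0 < M + 1 by rewrite ltr_wpDl.
have ee_gt0 : 0 < e * (1 - e) by rewrite mulr_gt0 // subr_gt0.
exists (e * (1 - e) / (M + 1)); first by rewrite divr_gt0.
have le_ee : e * (1 - e) / (M + 1) * M <= e * (1 - e).
  by rewrite mulrAC ler_pdivrMr // ler_pM2l // lerDl.
split; apply: le_trans le_ee _.
- by apply: ler_piMr; rewrite ?gerBl ltW.
- by apply: ler_piMl; rewrite ?subr_ge0 ltW.
Qed.

Section Infimum.
Variable R : realType.
Implicit Types (S : set R) (y b : R).

Lemma inf_eq_mem_lbound S b : S b -> lbound S b -> inf S = b.
Proof.
move=> Sb lbSb; apply/eqP; rewrite eq_le; apply/andP; split.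
  by apply: ge_inf => //; exists b.
by apply: lb_le_inf => //; exists b.
Qed.

(* [inf] of a set with no lower bound is [0], hence the hypothesis [0 < b]. *)
Lemma inf_lt_of_mem S y b : S y -> y < b -> 0 < b -> inf S < b.
Proof.
move=> Sy lt_yb b_gt0; have [lbS | nlbS] := pselect (has_lbound S).
  exact: le_lt_trans (ge_inf lbS Sy) lt_yb.
by rewrite inf_out // => -[].
Qed.

End Infimum.

Section PositiveSemidefinite.
Variables (R : realType) (n : nat).
Local Notation C := R[i].
Implicit Types (H : 'M[C]_n).

Lemma psdmx_scalar_addZ (a d : C) H : H \is hermsymmx -> d \is Num.real ->
  `|d| * mxabs_sum H <= a -> psdmx (a%:M + d *: H).
Proof.
move=> hH hd le_dH_a.
have a_ge0 : 0 <= a := le_trans (mulr_ge0 (normr_ge0 d) (mxabs_sum_ge0 H)) le_dH_a.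
split; first by rewrite hermsymmxD ?hermsymmxZ // scalar_hermsymmx ?ger0_real.
move=> v; rewrite -/(qform _ v) qformD -scalemx1 !qformZ.
have le_norm : `|d * qform H v| <= a * qform 1%:M v.
  rewrite normrM; apply: le_trans (ler_wpM2l (normr_ge0 d) (norm_qform_le H v)) _.
  by rewrite mulrA ler_wpM2r ?qform1_ge0.
have /andP[lb _] : - (a * qform 1%:M v) <= d * qform H v <= a * qform 1%:M v.
  by rewrite -real_ler_norml // realM // qform_real.
by rewrite addrC -[a * _]opprK subr_ge0.
Qed.

Lemma psdmx_scalar (a : C) : 0 <= a -> psdmx (a%:M : 'M[C]_n).
Proof.
move=> a_ge0; have := @psdmx_scalar_addZ a 0 1%:M (hermitian1mx_subproof _).
by rewrite scale0r addr0 normr0 mul0r; apply.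
Qed.

End PositiveSemidefinite.

Section MinEntropy.
Variables (R : realType) (n : nat) (eps : R).
Local Notation C := R[i].
Implicit Types (rho X E H : 'M[C]_n).

Lemma Dmin_eq_neg_ln rho X (a : R) : 0 < a ->
  (Dmin eps rho X = (- ln a)%:E)%E <-> Dmin_alpha eps rho X = a.
Proof.
move=> a_gt0; rewrite /Dmin; case: ifPn => [alpha_gt0 | alpha_le0]; last first.
  by split=> // alpha_a; move: alpha_le0; rewrite alpha_a a_gt0.
split=> [[/oppr_inj ln_eq] | -> //].
by apply: ln_inj ln_eq; rewrite posrE.
Qed.

Lemma feasible_scalar_test rho : 0 <= eps <= 1 -> \tr rho = 1 ->
  feasible_test eps rho (1 - eps%:C)%:M.
Proof.
move=> /andP[eps_ge0 eps_le1] trrho.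
have compl : 1%:M - (1 - eps%:C)%:M = eps%:C%:M :> 'M[C]_n by rewrite -raddfB /= subKr.
split; rewrite /loewner_le ?subr0 ?compl.
- by apply: psdmx_scalar; rewrite subr_ge0 lecE /= eqxx.
- by apply: psdmx_scalar; rewrite ler0c.
- by rewrite mul_mx_scalar mxtraceZ trrho mulr1.
Qed.

Lemma feasible_test_trace_ge rho E : \tr rho = 1 -> feasible_test eps rho E ->
  1 - eps <= complex.Re (\tr (E *m rho)).
Proof.
move=> trrho [_ _]; rewrite mulmxBr mulmx1 linearB /= trrho mxtrace_mulC => le_eps.
have : 1 - eps%:C <= \tr (E *m rho) by rewrite lerBlDr addrC -lerBlDr.
by rewrite lecE => /andP[].
Qed.

Lemma Dmin_alpha_self rho : 0 <= eps <= 1 -> density rho ->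
  Dmin_alpha eps rho rho = 1 - eps.
Proof.
move=> eps01 [_ trrho]; apply: inf_eq_mem_lbound.
  exists (1 - eps%:C)%:M; first exact: feasible_scalar_test.
  by rewrite mul_scalar_mx mxtraceZ trrho mulr1.
by move=> _ [E fE <-]; exact: feasible_test_trace_ge fE.
Qed.

Lemma feasible_perturbed_test rho H (d : C) :
  \tr rho = 1 -> H \is hermsymmx -> \tr (rho *m H) = 0 -> d \is Num.real ->
  `|d| * mxabs_sum H <= eps%:C -> `|d| * mxabs_sum H <= 1 - eps%:C ->
  feasible_test eps rho ((1 - eps%:C)%:M + d *: H).
Proof.
move=> trrho hH trrhoH hd le_eps le_1eps.
have compl : 1%:M - ((1 - eps%:C)%:M + d *: H) = eps%:C%:M + (- d) *: H.
  by rewrite opprD addrA -raddfB /= subKr scaleNr.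
split; rewrite /loewner_le ?subr0 ?compl.
- exact: psdmx_scalar_addZ.
- by apply: psdmx_scalar_addZ; rewrite ?realN ?normrN.
- rewrite mulmxDr mul_mx_scalar -scalemxAr mxtraceD !mxtraceZ trrho trrhoH.
  by rewrite mulr1 mulr0 addr0.
Qed.

Lemma Dmin_alpha_lt rho X : 0 < eps < 1 -> density rho ->
  X \is hermsymmx -> \tr X = 1 -> rho != X -> Dmin_alpha eps rho X < 1 - eps.
Proof.
move=> eps01 [[hrho _] trrho] hX trX neq_rhoX.
have hD : rho - X \is hermsymmx := hermsymmxB hrho hX.
set H := center_mx rho (rho - X).
have eps01C : 0 < eps%:C < 1 by rewrite !ltcE /= !eqxx.
have [d d_gt0 [le_eps le_1eps]] := exists_small_scale eps01C (mxabs_sum_ge0 H).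
set E := (1 - eps%:C)%:M + d *: H.
have fE : feasible_test eps rho E.
  apply: feasible_perturbed_test; rewrite ?gtr0_norm ?gtr0_real //.
    exact: center_mx_hermsymmx.
  exact: mxtrace_mul_center_mx.
have trEX : \tr (E *m X) = 1 - eps%:C - d * \tr ((rho - X) *m (rho - X)).
  rewrite mulmxDl mul_scalar_mx -scalemxAl mxtraceD !mxtraceZ trX mulr1.
  by rewrite mxtrace_center_mx_diff_mul // mulrN.
have lt_trEX : \tr (E *m X) < 1 - eps%:C.
  by rewrite trEX gtrBl mulr_gt0 // mxtrace_mul_self_gt0 // subr_eq0.
apply: (@inf_lt_of_mem _ _ (complex.Re (\tr (E *m X)))).
- by exists E.
- by move: lt_trEX; rewrite ltcE => /andP[].
- by rewrite subr_gt0; case/andP: eps01.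
Qed.

End MinEntropy.

Theorem lemmaS1 (R : realType) (n : nat) (eps : R) (rho X : 'M[R[i]]_n) :
  0 < eps < 1 ->
  density rho ->
  X \is hermsymmx ->
  \tr X = 1 ->
  (Dmin eps rho X = ((- ln (1 - eps))%:E)%E <-> rho = X).
Proof.
move=> eps01 rho_density hX trX.
have [eps_gt0 eps_lt1] := andP eps01.
rewrite Dmin_eq_neg_ln ?subr_gt0 //; split=> [alpha_eq | <-].
  have [// | neq_rhoX] := eqVneq rho X.
  by have := Dmin_alpha_lt eps01 rho_density hX trX neq_rhoX; rewrite alpha_eq ltxx.
by apply: Dmin_alpha_self rho_density; rewrite !ltW.
Qed.
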